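(* The rule $R$ is a well-defined function $\Sigma^n\to\Sigma^n$: there is no $s\in\Sigma^n$ with $ICR_0(s)\in\mathrm{Reps}$, $ICR_1(s)\in\mathrm{Reps}$ and $ICR_0(s)\neq ICR_2(s)$ (in particular, if $k>2$ there is no $s$ with both $ICR_0(s),ICR_1(s)\in\mathrm{Reps}$).
   Context: Let $k\ge 2$, $\Sigma=\{0,\dots,k-1\}$ with arithmetic modulo $k$, $n\ge 1$, and $s=s[0]\cdots s[n-1]\in\Sigma^n$. For an integer $j$, $ICR_j(s)=s[1]\cdots s[n-1](s[0]+j)$; each $ICR_j$ is a bijection of $\Sigma^n$; $ICR=ICR_1$. Let $\mathbf N$ be the set of cycles (orbits) of the permutation $ICR_1$ of $\Sigma^n$; $orbit(s)$ is the cycle containing $s$. Let $\mathbf G$ be the directed graph on $\mathbf N$ with an arc $(\mathcal U,\mathcal V)$ iff some $s\in\mathcal U$ has $ICR_0(s)\in\mathcal V$. Let $\mathbf T$ be a directed spanning tree of $\mathbf G$ rooted at $\mathcal R\in\mathbf N$ (arcs from parent to child), with parent map $parent$ on $\mathbf N\setminus\{\mathcal R\}$; the depth of a cycle is its distance from the root (root has depth $0$). For each $\mathcal U\ne\mathcal R$, a representative $rep(\mathcal U)$ is a fixed node $s\in\mathcal U$ with $ICR_0^{-1}(s)\in parent(\mathcal U)$ and $s[n-1]\equiv \text{depth}(\mathcal U)\pmod k$ (such a node is assumed to exist and one is fixed). $\mathrm{Reps}$ is the set of all representatives. Define $R(s)=ICR_0(s)$ if $ICR_0(s)\in\mathrm{Reps}$;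 $R(s)=ICR_2(s)$ if $ICR_1(s)\in\mathrm{Reps}$; $R(s)=ICR_1(s)$ otherwise. *)

From mathcomp Require Import all_boot all_algebra.
Set Implicit Arguments. Unset Strict Implicit. Unset Printing Implicit Defensive.
Import GRing.Theory.
Local Open Scope ring_scope.

(* Words s = s[0]..s[n-1] over Sigma = Z/kZ (k >= 2 assumed in the theorem). *)
Definition word (k n : nat) := {ffun 'I_n -> 'Z_k}.

(* ICR_j(s) = s[1] ... s[n-1] (s[0] + j).  Position i < n-1 gets s[i+1];
   position n-1 gets s[0] + j.  (insubd i _ only supplies a default index.) *)
Definition icr (k n : nat) (j : 'Z_k) (s : word k n) : word k n :=
  [ffun i : 'I_n => if (i.+1 < n)%N then s (insubd i i.+1)
                    else s (insubd i 0%N) + j].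

Definition cycle_of (k n : nat) (s : word k n) : {set word k n} :=
  [set t | fconnect (icr 1) s t].

Definition cycles (k n : nat) : {set {set word k n}} :=
  [set cycle_of s | s : word k n].

Definition arcG (k n : nat) (U V : {set word k n}) : bool :=
  [exists s in U, icr 0 s \in V].

Definition spanning_tree (k n : nat) (Rt : {set word k n})
    (par : {set word k n} -> {set word k n}) : Prop :=
  Rt \in cycles k n /\
  (forall U, U \in cycles k n -> U != Rt ->
       par U \in cycles k n /\ arcG (par U) U) /\
  (forall U, U \in cycles k n -> exists m, iter m par U = Rt).

(* depth = distance to the root in the tree = least m with par^m(U) = Rt
   (searched below the bound #|{set word}|, which exceeds the number of
   cycles, hence any tree path length). *)
Definition depth (k n : nat) (Rt : {set word k n})
    (par : {set word k n} -> {set word k n}) (U : {set word k n}) : nat :=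
  find (fun m => iter m par U == Rt) (iota 0 #|{: {set word k n}}|).

Definition valid_reps (k n : nat) (Rt : {set word k n})
    (par : {set word k n} -> {set word k n})
    (rep : {set word k n} -> word k n) : Prop :=
  forall U, U \in cycles k n -> U != Rt ->
    [/\ rep U \in U,
        finv (icr 0) (rep U) \in par U &
        forall i : 'I_n, i.+1 = n -> rep U i = (depth Rt par U)%:R].

Definition Reps (k n : nat) (Rt : {set word k n})
    (rep : {set word k n} -> word k n) : {set word k n} :=
  [set rep U | U in cycles k n :\ Rt].

(** Let [icr 0 s = rep U] and [icr 1 s = rep V].  Since [icr 0] is a bijection,
    [s] is the [icr 0]-predecessor of [rep U], so [s] lies in [par U]; and
    [icr 1 s] lies in the [icr 1]-cycle of [s], so [V = par U].  Hence
    [depth U = depth V + 1].  The last letters of [icr 0 s] and [icr 1 s] are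
    [s[0]] and [s[0] + 1], and they must equal [depth U] and [depth V] mod [k];
    so [s[0] = s[0] + 2], i.e. [2 = 0] in [Z/kZ], and then [icr 0 s = icr 2 s]. *)

From mathcomp Require Import all_boot all_algebra.
Set Implicit Arguments. Unset Strict Implicit. Unset Printing Implicit Defensive.
Import GRing.Theory.
Local Open Scope ring_scope.

Lemma traject_iota (T : Type) (f : T -> T) (x : T) (m : nat) :
  traject f x m = [seq iter i f x | i <- iota 0 m].
Proof.
elim: m x => [|m IHm] x //=; rewrite IHm (iotaDl 1 0) -map_comp.
by congr (_ :: _); apply: eq_map => i /=; rewrite -iterSr.
Qed.

Section FindexIter.
Variables (T : finType) (f : T -> T).

Lemma find_iter_iota (x y : T) (m : nat) : fconnect f x y -> (#|T| <= m)%N ->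
  find (fun i => iter i f x == y) (iota 0 m) = findex f x y.
Proof.
move=> xy leTm.
have -> : find (fun i => iter i f x == y) (iota 0 m) = index y (traject f x m).
  by rewrite traject_iota /index find_map.
rewrite -(subnKC (leq_trans (max_card (fconnect f x)) leTm)) trajectD index_cat.
by rewrite -/(orbit f x) -fconnect_orbit xy.
Qed.

Lemma findex_le_iter (x : T) (i : nat) : (findex f x (iter i f x) <= i)%N.
Proof.
case: (ltnP i (order f x)) => [lt_i|le_i]; first by rewrite findex_iter.
exact/ltnW/(leq_trans (findex_max (fconnect_iter f i x))).
Qed.

Lemma findexS (x y : T) : fconnect f x y -> x != y ->
  findex f x y = (findex f (f x) y).+1.
Proof.
move=> xy neq_xy; have := findex_eq0 f x y; rewrite (negbTE neq_xy).
case def_e: (findex f x y) => [|e] // _.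
have fx_e : iter e f (f x) = y by rewrite -iterSr -def_e iter_findex.
have fxy : fconnect f (f x) y by rewrite -fx_e fconnect_iter.
have := findex_le_iter x (findex f (f x) y).+1.
rewrite iterSr iter_findex // def_e ltnS => le_e.
by apply/eqP; rewrite eqSS eqn_leq le_e -[in findex _ _ y]fx_e findex_le_iter.
Qed.

End FindexIter.

Lemma icr_last (k n : nat) (j : 'Z_k) (s : word k n) (i : 'I_n) :
  i.+1 = n -> icr j s i = s (insubd i 0%N) + j.
Proof. by move=> iE; rewrite /icr ffunE iE ltnn. Qed.

Lemma icr_inj (k n : nat) (j : 'Z_k) : injective (@icr k n j).
Proof.
move=> s s' eq_icr; apply/ffunP => x.
have n_gt0 : (0 < n)%N by apply: leq_ltn_trans (ltn_ord x).
case: (posnP x) => [x0|x_gt0].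
- have lt_last : (n.-1 < n)%N by rewrite prednK.
  have := congr1 (fun w : word k n => w (Ordinal lt_last)) eq_icr => /=.
  rewrite !icr_last /= ?prednK //.
  have -> : insubd (Ordinal lt_last) 0%N = x by apply: val_inj; rewrite /= insubdK ?x0.
  exact: addIr.
- have lt_pred : (x.-1 < n)%N by apply: leq_ltn_trans (leq_pred _) (ltn_ord x).
  have := congr1 (fun w : word k n => w (Ordinal lt_pred)) eq_icr => /=.
  rewrite /icr !ffunE /= prednK // ltn_ord.
  suff -> : insubd (Ordinal lt_pred) x = x by [].
  by apply: val_inj; rewrite /= insubdK //; apply: ltn_ord.
Qed.

Lemma cycle_of_eq (k n : nat) (s t : word k n) :
  fconnect (icr 1) s t -> cycle_of s = cycle_of t.
Proof.
move=> st; apply/setP => u; rewrite !inE.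
exact: (same_connect (fconnect_sym (@icr_inj k n 1)) st).
Qed.

Lemma cycles_cycle_of (k n : nat) (A : {set word k n}) (t : word k n) :
  A \in cycles k n -> t \in A -> A = cycle_of t.
Proof. by case/imsetP => s _ -> /[1!inE]; apply: cycle_of_eq. Qed.

Section SpanningTree.
Variables (k n : nat) (Rt : {set word k n}) (par : {set word k n} -> {set word k n}).
Hypothesis tree : spanning_tree Rt par.

Lemma par_cycles (U : {set word k n}) :
  U \in cycles k n -> U != Rt -> par U \in cycles k n.
Proof. by case: tree => _ [par_arc _] Ucyc /(par_arc U Ucyc) []. Qed.

Lemma fconnect_root (U : {set word k n}) : U \in cycles k n -> fconnect par U Rt.
Proof. by case: tree => _ [_ to_root] /to_root [m <-]; apply: fconnect_iter. Qed.

Lemma depthE (U : {set word k n}) :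
  U \in cycles k n -> depth Rt par U = findex par U Rt.
Proof. by move=> Ucyc; rewrite /depth find_iter_iota ?fconnect_root. Qed.

Lemma depth_par (U : {set word k n}) : U \in cycles k n -> U != Rt ->
  depth Rt par U = (depth Rt par (par U)).+1.
Proof.
by move=> Ucyc UR; rewrite !depthE ?par_cycles // findexS ?fconnect_root.
Qed.

Variable rep : {set word k n} -> word k n.
Hypothesis reps : valid_reps Rt par rep.

Lemma par_of_icr_reps (s : word k n) (U V : {set word k n}) :
  U \in cycles k n -> U != Rt -> V \in cycles k n -> V != Rt ->
  icr 0 s = rep U -> icr 1 s = rep V -> V = par U.
Proof.
move=> Ucyc UR Vcyc VR eU eV.
have s_parU : s \in par U.
  by case: (reps Ucyc UR) => _ + _; rewrite -eU finv_f //; apply: icr_inj.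
have icr1s_V : icr 1 s \in V by case: (reps Vcyc VR); rewrite eV.
rewrite (cycles_cycle_of Vcyc icr1s_V) (cycles_cycle_of (par_cycles Ucyc UR) s_parU).
exact/esym/cycle_of_eq/fconnect1.
Qed.

End SpanningTree.

Theorem lemma9 (k n : nat) (hk : (1 < k)%N) (hn : (0 < n)%N)
    (Rt : {set word k n}) (par : {set word k n} -> {set word k n})
    (rep : {set word k n} -> word k n) :
  spanning_tree Rt par -> valid_reps Rt par rep ->
  ~ (exists s : word k n,
       [/\ icr 0 s \in Reps Rt rep, icr 1 s \in Reps Rt rep & icr 0 s != icr 2 s]).
Proof.
move=> tree reps [s [/imsetP [U + eU] /imsetP [V + eV] neq_icr02]].
rewrite !inE => /andP [UR Ucyc] /andP [VR Vcyc].
have V_parU := par_of_icr_reps tree reps Ucyc UR Vcyc VR eU eV.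
have [i iE] : exists i : 'I_n, i.+1 = n.
  have lt_last : (n.-1 < n)%N by rewrite prednK.
  by exists (Ordinal lt_last); rewrite /= prednK.
have lastU : s (insubd i 0%N) + 0 = (depth Rt par U)%:R.
  by rewrite -icr_last // eU; case: (reps U Ucyc UR) => _ _ ->.
have lastV : s (insubd i 0%N) + 1 = (depth Rt par V)%:R.
  by rewrite -icr_last // eV; case: (reps V Vcyc VR) => _ _ ->.
have two_eq0 : (2 : 'Z_k) = 0.
  apply: (addrI (s (insubd i 0%N))).
  by rewrite lastU depth_par // -V_parU -[in RHS]natr1 -lastV -addrA.
by move: neq_icr02; rewrite two_eq0 eqxx.
Qed.
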